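(* Let $R=k[x_1,\dots,x_m]$ be a polynomial ring over a field $k$, let $I$ be a monomial ideal and $J\subseteq R$ an ideal, and let $I:\langle J\rangle=\bigcup_{r\ge0}(I:J^r)$. Let $f$ and $f'$ be the least common multiples of the minimal generating monomials of $I$ and of $I:\langle J\rangle$, respectively. Then $f'$ divides $f$. *)

From mathcomp Require Import all_boot all_algebra.
From mathcomp Require Export mpoly.
Set Implicit Arguments. Unset Strict Implicit. Unset Printing Implicit Defensive.
Import GRing.Theory.
Local Open Scope ring_scope.

Section Ideals.
Variables (k : fieldType) (m : nat).
Local Notation R := {mpoly k[m]}.

Definition is_ideal (I : R -> Prop) : Prop :=
  [/\ I 0, (forall p q, I p -> I q -> I (p + q)) & (forall a p, I p -> I (a * p))].

Definition ideal_gen (S : R -> Prop) (p : R) : Prop :=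
  exists (n : nat) (c : 'I_n -> R) (g : 'I_n -> R),
    (forall i, S (g i)) /\ p = \sum_(i < n) c i * g i.

Definition monomial_ideal (I : R -> Prop) : Prop :=
  is_ideal I /\
  exists E : 'X_{1..m} -> Prop,
    forall p, I p <-> ideal_gen (fun g => exists e, E e /\ g = 'X_[e]) p.

(* The r-th power J^r of an ideal: generated by products of r elements of J
   (J^0 = R, generated by the empty product 1). *)
Definition pow_ideal (J : R -> Prop) (r : nat) : R -> Prop :=
  ideal_gen (fun g => exists j : 'I_r -> R,
                (forall i, J (j i)) /\ g = \prod_(i < r) j i).

Definition colon (I K : R -> Prop) (p : R) : Prop :=
  forall q, K q -> I (p * q).

Definition saturation (I J : R -> Prop) (p : R) : Prop :=
  exists r : nat, colon I (pow_ideal J r) p.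

Definition min_gen_monomial (I : R -> Prop) (e : 'X_{1..m}) : Prop :=
  I 'X_[e] /\ forall e' : 'X_{1..m}, I 'X_[e'] -> (e' <= e)%MM -> e' = e.

Definition lcm_monomials (G : seq 'X_{1..m}) : R :=
  'X_[ [multinom \max_(e <- G) e i | i < m] ].

Definition mdivides (a b : R) : Prop := exists q : R, b = q * a.

End Ideals.

(* Let F be the exponent of the lcm of the minimal generators of the monomial
   ideal I. Every monomial of I is divisible by a minimal generator, whose
   exponent is at most F; hence x^(e + b) in I implies x^(min(e, F) + b) in I.
   Since I is spanned by the monomials it contains, membership of x^e q in I
   only depends on the monomials x^(e + b) for b in the support of q, so
   x^e in I : <J> implies x^(min(e, F)) in I : <J>. Minimality then forces
   min(e, F) = e for every minimal generator x^e of I : <J>, i.e. e <= F. *)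
From mathcomp Require Import all_boot all_algebra.
From mathcomp Require Import mpoly.
From mathcomp Require Import zify.
From Stdlib Require Import Classical.
Set Implicit Arguments. Unset Strict Implicit.
Import GRing.Theory.
Local Open Scope ring_scope.

Section Multinomials.
Variable m : nat.
Implicit Types e f b : 'X_{1..m}.

Definition mgcd e f := [multinom minn (e i) (f i) | i < m].

Lemma lem_mgcdl e f : (mgcd e f <= e)%MM.
Proof. by apply/mnm_lepP => i; rewrite mnmE geq_minl. Qed.

Lemma lem_mgcdr e f : (mgcd e f <= f)%MM.
Proof. by apply/mnm_lepP => i; rewrite mnmE geq_minr. Qed.

Lemma lem_mgcd g e f : (g <= mgcd e f)%MM = (g <= e)%MM && (g <= f)%MM.
Proof.
apply/mnm_lepP/andP => [le_g | [/mnm_lepP le_ge /mnm_lepP le_gf] i].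
  by split; apply/mnm_lepP => i; move: (le_g i);
    rewrite mnmE leq_min => /andP[].
by rewrite mnmE leq_min le_ge le_gf.
Qed.

Lemma mgcdDl_le e b f : (mgcd (e + b) f <= mgcd e f + b)%MM.
Proof. by apply/mnm_lepP => i; rewrite !(mnmE, mnmDE); lia. Qed.

Definition lcm_exponent (G : seq 'X_{1..m}) :=
  [multinom \max_(e <- G) e i | i < m].

Lemma lepm_lcm_exponent G e : e \in G -> (e <= lcm_exponent G)%MM.
Proof. by move=> eG; apply/mnm_lepP => i; rewrite mnmE (leq_bigmax_seq e). Qed.

Lemma lcm_exponent_le G f :
  (forall e, e \in G -> (e <= f)%MM) -> (lcm_exponent G <= f)%MM.
Proof.
move=> le_Gf; apply/mnm_lepP => i; rewrite mnmE.
by apply/bigmax_leqP_seq => e eG _; apply/mnm_lepP/le_Gf.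
Qed.

Lemma mdeg_ltm e f : (e <= f)%MM -> e != f -> (mdeg e < mdeg f)%N.
Proof.
move=> le_ef ne_ef; rewrite -(submK le_ef) mdegD.
rewrite -[X in (X < _)%N]add0n ltn_add2r lt0n mdeg_eq0.
by apply: contraNneq ne_ef => fe0; rewrite -(submK le_ef) fe0 add0m.
Qed.

End Multinomials.

Section MonomialIdeals.
Variables (k : fieldType) (m : nat).
Local Notation R := {mpoly k[m]}.
Implicit Types (I K : R -> Prop) (e f : 'X_{1..m}).

Lemma mdivides_X e f : (e <= f)%MM -> mdivides ('X_[e] : R) 'X_[f].
Proof. by move=> le_ef; exists 'X_[f - e]; rewrite -mpolyXD submK. Qed.

Lemma ideal_sum I (T : eqType) (r : seq T) (F : T -> R) :
  is_ideal I -> (forall x, x \in r -> I (F x)) -> I (\sum_(x <- r) F x).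
Proof.
case=> I0 ID _; elim: r => [|x r IHr] IF; first by rewrite big_nil.
rewrite big_cons; apply: ID; first by apply: IF; rewrite inE eqxx.
by apply: IHr => y yr; apply: IF; rewrite inE yr orbT.
Qed.

Lemma ideal_divisibleX I e f :
  is_ideal I -> I 'X_[e] -> (e <= f)%MM -> I 'X_[f].
Proof.
by case=> _ _ IM Ie le_ef; rewrite -(submK le_ef) mpolyXD; apply: IM.
Qed.

Lemma monomial_ideal_msupp I p a :
  monomial_ideal I -> I p -> a \in msupp p -> I 'X_[a].
Proof.
case=> [[_ _ IM] [E HE]] /HE[n [c [g [Eg ->]]]].
rewrite mcoeff_msupp raddf_sum /=.
have [i | c0] := pickP (fun i => (c i * g i)@_a != 0); last first.
  by rewrite big1 ?eqxx // => i _; apply/eqP/negbFE/c0.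
have [e [Ee ->]] := Eg i; rewrite -mcoeff_msupp (perm_mem (msuppMX _ _)).
case/mapP => d _ -> _; rewrite mpolyXD mulrC; apply: IM; apply/HE.
exists 1%N, (fun=> 1), (fun=> 'X_[e]).
by split; [exists e | rewrite big_ord1 mul1r].
Qed.

Lemma min_gen_monomial_exists I a :
  I 'X_[a] -> exists2 g, min_gen_monomial I g & (g <= a)%MM.
Proof.
have [n] := ubnP (mdeg a); elim: n a => // n IHn a /ltnSE le_an Ia.
case: (classic (exists2 e, I 'X_[e] & (e <= a)%MM && (e != a))).
  case=> e Ie /andP[le_ea ne_ea].
  have [|g min_g le_ge] := IHn e _ Ie.
    exact: leq_trans (mdeg_ltm le_ea ne_ea) le_an.
  by exists g; last exact: lepm_trans le_ea.
move=> a_min; exists a; last exact: lepm_refl.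
split=> // e Ie le_ea; apply/eqP; apply: contra_notT a_min => ne_ea.
by exists e; rewrite // le_ea.
Qed.

Section TruncatedExponents.
Variables (I : R -> Prop) (F : 'X_{1..m}).
Hypothesis I_monomial : monomial_ideal I.
Hypothesis min_gen_le : forall g, min_gen_monomial I g -> (g <= F)%MM.

Lemma monomial_ideal_mgcd a : I 'X_[a] -> I 'X_[mgcd a F].
Proof.
case/min_gen_monomial_exists => g min_g le_ga.
apply: (ideal_divisibleX _ min_g.1); first by case: I_monomial.
by rewrite lem_mgcd le_ga (min_gen_le min_g).
Qed.

Lemma colon_mgcd K e : colon I K 'X_[e] -> colon I K 'X_[mgcd e F].
Proof.
have [I_ideal _] := I_monomial; have [_ _ IM] := I_ideal.
move=> Ie q Kq; rewrite [q]mpolyE mulr_sumr; apply: ideal_sum => // b qb.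
rewrite -mul_mpolyC mulrCA -mpolyXD; apply: IM.
have Ieb : I 'X_[e + b].
  apply: (monomial_ideal_msupp I_monomial (Ie q Kq)).
  by rewrite mcoeff_msupp mulrC mcoeffMX -mcoeff_msupp.
exact: ideal_divisibleX (monomial_ideal_mgcd Ieb) (mgcdDl_le _ _ _).
Qed.

Lemma saturation_mgcd J e :
  saturation I J 'X_[e] -> saturation I J 'X_[mgcd e F].
Proof. by case=> r Ie; exists r; apply: colon_mgcd. Qed.

End TruncatedExponents.

Lemma min_gen_monomial_le I F e :
  (forall a, I 'X_[a] -> I 'X_[mgcd a F]) ->
  min_gen_monomial I e -> (e <= F)%MM.
Proof.
move=> I_mgcd [Ie e_min].
by rewrite -(e_min _ (I_mgcd _ Ie)) ?lem_mgcdr ?lem_mgcdl.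
Qed.

End MonomialIdeals.

Theorem lemma2p8 (k : fieldType) (m : nat) (I J : {mpoly k[m]} -> Prop)
  (G G' : seq 'X_{1..m}) :
  monomial_ideal I -> is_ideal J ->
  (forall e, e \in G <-> min_gen_monomial I e) ->
  (forall e, e \in G' <-> min_gen_monomial (saturation I J) e) ->
  mdivides (lcm_monomials k G') (lcm_monomials k G).
Proof.
move=> I_monomial _ G_min G'_min.
have le_GF g : min_gen_monomial I g -> (g <= lcm_exponent G)%MM.
  by move/G_min; apply: lepm_lcm_exponent.
apply: mdivides_X; apply: lcm_exponent_le => e /G'_min.
by apply: min_gen_monomial_le => a; apply: saturation_mgcd.
Qed.
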